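(* Let $p>0$, let $X_p$ be the $p$-singular Cantor-type random variable with CDF $F_p$, and let $m_p$ and $e_p$ be its mean residual life and generalized mean residual life functions. Then: (i) $\mathbb E[X_p]=\dfrac32\cdot\dfrac{p}{2p+1}$. (ii) $m_p$ is continuous on $[0,1]$, $e_p$ is continuous on $(0,1)$, and for every $x\in(0,1)$, each of $m_p$ and $e_p$ is locally decreasing at $x$ if and only if $x\in[0,1]\setminus\mathcal C$. (iii) The equation $m_p(x)=x$ has a unique solution $x_p^*$ in $[0,1]$, given by $$x_p^*=\frac16+\frac{5p+4}{12(2p+1)}.$$ Moreover, $p\mapsto x_p^*$ is decreasing on $(0,\infty)$ and $x_p^*\in(3/8,1/2)$ for every $p>0$.
   Context: For $p>0$, the $p$-singular Cantor-type distribution has CDF $F_p:[0,1]\to\mathbb R$, defined as the unique real-valued, monotone nondecreasing function satisfying (a) $F_p(x/3)=F_p(x)/(p+1)$ for all $x\in[0,1]$, and (b) $F_p(1-x)=1-pF_p(x)$ for all $x\in[0,1/3]$. It is continuous, with $F_p(0)=0$, $F_p(1)=1$, and $F_p(x)=1/(p+1)$ for all $x\in[1/3,2/3]$. For $p=1$ it is the Cantor distribution. The Cantor set is $\mathcal C=\bigcap_{n\ge1}C_n$, where $C_0=[0,1]$ and $C_n=\tfrac13C_{n-1}\cup(\tfrac23+\tfrac13C_{n-1})$. The MRL function of $X_p$ is $m_p(x)=\frac{1}{1-F_p(x)}\int_x^1(1-F_p(u))\,du$ for $x<1$ and $m_p(x)=0$ for $x\ge1$. The generalized MRL function is $e_p(x)=m_p(x)/x$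 for $0<x<1$. A function $f:(0,1)\to\mathbb R$ is locally decreasing at $x$ if there is an open neighborhood $U$ of $x$ such that $f|_U$ is non-increasing. *)

From Stdlib Require Import Reals Lra ClassicalEpsilon.
Open Scope R_scope.

(* F is the CDF of the p-singular Cantor-type distribution: the unique
   monotone nondecreasing real function on [0,1] satisfying (a) and (b). *)
Definition is_Fp (p : R) (F : R -> R) : Prop :=
  (forall x y, 0 <= x -> x <= y -> y <= 1 -> F x <= F y) /\
  (forall x, 0 <= x <= 1 -> F (x / 3) = F x / (p + 1)) /\
  (forall x, 0 <= x <= 1/3 -> F (1 - x) = 1 - p * F x).

Definition RInt (f : R -> R) (a b : R) : R :=
  epsilon (inhabits 0) (fun v => exists pr : Riemann_integrable f a b, RiemannInt pr = v).

(* Expectation of a [0,1]-valued random variable with CDF F. *)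
Definition mean (F : R -> R) : R := RInt (fun u => 1 - F u) 0 1.

Definition mrl (F : R -> R) (x : R) : R :=
  if Rlt_dec x 1 then RInt (fun u => 1 - F u) x 1 / (1 - F x) else 0.

Definition gmrl (F : R -> R) (x : R) : R := mrl F x / x.

(* C_n: C_0 = [0,1], C_n = C_{n-1}/3 ∪ (2/3 + C_{n-1}/3). *)
Fixpoint in_Cn (n : nat) (x : R) : Prop :=
  match n with
  | O => 0 <= x <= 1
  | S k => in_Cn k (3 * x) \/ in_Cn k (3 * x - 2)
  end.

Definition cantor (x : R) : Prop := forall n, in_Cn n x.

(* f : (0,1) -> R is locally decreasing at x: there is an open neighbourhood
   U of x (taken as an open interval, intersected with the domain (0,1))
   on which f is non-increasing. *)
Definition loc_decr (f : R -> R) (x : R) : Prop :=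
  exists d, 0 < d /\
    forall y z, x - d < y -> y <= z -> z < x + d -> 0 < y -> z < 1 -> f z <= f y.

Definition xstar (p : R) : R := 1/6 + (5 * p + 4) / (12 * (2 * p + 1)).

From Pilot Require Import Defs.
From Stdlib Require Import Reals Lra ClassicalEpsilon Classical.
From Coquelicot Require Import Coquelicot.
Open Scope R_scope.

(* By self-similarity an interval of length 3^-n carries F-mass at most
   (max(1,p)/(p+1))^n, so F is continuous and m = I/(1-F), with
   I(x) = int_x^1 (1-F), is continuous. Splitting [0,1] into thirds gives an
   equation for int_0^1 F = (p+2)/(4p+2), hence (i). The defect
   h(x) = I(x) - x(1-F(x)) vanishes exactly at the fixed points of m: it is
   affine on [1/3,2/3] with zero x_p^*, negative on (1/2,1), and on [0,1/3]
   the relation (p+1) h(x) = h(3x)/3 + p(2/3 + S/3 - 2x), S = int_0^1 F,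
   together with a lower bound for h on [1/3,1], forces h > 0. Off the Cantor set F is locally
   constant, so m = I/const is non-increasing nearby. Near a Cantor point F
   has arbitrarily large difference quotients, and since I has slope at most 1
   this makes m, and then m/x, increase somewhere in every neighbourhood. *)

Lemma pow_le_one x n : 0 <= x <= 1 -> x ^ n <= 1.
Proof.
  intros hx. induction n as [|n IH]; simpl; [lra|].
  assert (0 <= x ^ n) by (apply pow_le; lra). nra.
Qed.

Lemma pow_one_third_small eps : 0 < eps -> exists n, (1/3) ^ n < eps.
Proof.
  intros heps.
  destruct (pow_lt_1_zero (1/3) ltac:(rewrite Rabs_right; lra) eps heps) as [n hn].
  exists n. specialize (hn n (le_n _)).
  rewrite Rabs_right in hn by (apply Rle_ge, pow_le; lra). exact hn.
Qed.

Lemma div_sub_div_ge_mul v g h : 0 <= v -> 0 < h -> h <= g -> g <= 1 ->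
  v * (g - h) <= v / h - v / g.
Proof.
  intros hv hh hhg hg.
  replace (v / h - v / g) with (v * (g - h) / (g * h)) by (field; lra).
  assert (0 < g * h <= 1) by (split; nra).
  assert (0 <= v * (g - h)) by nra.
  apply Rmult_le_reg_r with (g * h); [lra|].
  replace (v * (g - h) / (g * h) * (g * h)) with (v * (g - h)) by (field; lra). nra.
Qed.

Lemma Defs_RInt_eq (f : R -> R) a b : ex_RInt f a b -> Defs.RInt f a b = RInt f a b.
Proof.
  intros hex. unfold Defs.RInt.
  destruct (epsilon_spec (inhabits 0)
              (fun v => exists pr : Riemann_integrable f a b, RiemannInt pr = v)) as [pr hpr].
  { exists (RiemannInt (ex_RInt_Reals_0 _ _ _ hex)), (ex_RInt_Reals_0 _ _ _ hex). reflexivity. }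
  rewrite <- hpr. symmetry. apply RInt_Reals.
Qed.

(* Coquelicot's integral lemmas are stated for normed modules; their instances
   at R expose Rmult and Rplus, so that rewrite can match them. *)
Lemma RInt_ext_R (f g : R -> R) a b : (forall x, Rmin a b < x < Rmax a b -> f x = g x) ->
  RInt f a b = RInt g a b.
Proof. intros. apply (RInt_ext f g a b). auto. Qed.

Lemma RInt_scal_R (f : R -> R) k a b : ex_RInt f a b ->
  RInt (fun u => k * f u) a b = k * RInt f a b.
Proof. intros. apply (RInt_scal f a b k). auto. Qed.

Lemma RInt_comp_lin_R (f : R -> R) u v a b : ex_RInt f (u * a + v) (u * b + v) ->
  RInt (fun y => u * f (u * y + v)) a b = RInt f (u * a + v) (u * b + v).
Proof. intros. apply (RInt_comp_lin f u v a b). auto. Qed.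

Lemma RInt_plus_R (f g : R -> R) a b : ex_RInt f a b -> ex_RInt g a b ->
  RInt (fun u => f u + g u) a b = RInt f a b + RInt g a b.
Proof. intros. apply (RInt_plus f g a b); auto. Qed.

Lemma RInt_const_R (c a b : R) : RInt (fun _ => c) a b = (b - a) * c.
Proof. apply (RInt_const a b c). Qed.

Lemma RInt_swap_R (f : R -> R) a b : ex_RInt f a b -> RInt f b a = - RInt f a b.
Proof. intros. symmetry. apply (opp_RInt_swap f a b). auto. Qed.

Lemma RInt_Chasles_R (f : R -> R) a b c : ex_RInt f a b -> ex_RInt f b c ->
  RInt f a b + RInt f b c = RInt f a c.
Proof. intros. apply (RInt_Chasles f a b c); auto. Qed.

Lemma RInt_le_const_bounds (f : R -> R) a b : a <= b -> ex_RInt f a b ->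
  (forall x y, x <= y -> f x <= f y) -> (b - a) * f a <= RInt f a b <= (b - a) * f b.
Proof.
  intros hab hex hmono. rewrite <- !RInt_const_R.
  split; apply RInt_le; auto using ex_RInt_const; intros x hx; apply hmono; lra.
Qed.

Lemma ex_RInt_comp_lin_R (f : R -> R) u v a b : ex_RInt f (u * a + v) (u * b + v) ->
  ex_RInt (fun y => u * f (u * y + v)) a b.
Proof. intros. apply (ex_RInt_comp_lin f u v a b). auto. Qed.

Lemma ex_RInt_scal_R (f : R -> R) k a b : ex_RInt f a b -> ex_RInt (fun u => k * f u) a b.
Proof. intros. apply (ex_RInt_scal f a b k). auto. Qed.

Definition clamp01 x := Rmax 0 (Rmin 1 x).

Ltac clamp01_cases :=
  unfold clamp01 in *;
  repeat match goal with
  | |- context [Rmin 1 ?x] =>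
      destruct (Rle_dec x 1); [rewrite (Rmin_right 1 x) by lra | rewrite (Rmin_left 1 x) by lra]
  | |- context [Rmax 0 ?x] =>
      destruct (Rle_dec 0 x); [rewrite (Rmax_right 0 x) by lra | rewrite (Rmax_left 0 x) by lra]
  end.

Lemma clamp01_range x : 0 <= clamp01 x <= 1.
Proof. clamp01_cases; lra. Qed.

Lemma clamp01_id x : 0 <= x <= 1 -> clamp01 x = x.
Proof. intros. clamp01_cases; lra. Qed.

Lemma clamp01_mono x y : x <= y -> clamp01 x <= clamp01 y.
Proof. intros. clamp01_cases; lra. Qed.

Lemma clamp01_lipschitz x y : Rabs (clamp01 x - clamp01 y) <= Rabs (x - y).
Proof. clamp01_cases; unfold Rabs; repeat destruct Rcase_abs; lra. Qed.

Definition F_area p := (p + 2) / (4 * p + 2).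

Lemma F_area_bounds p : 0 < p -> 0 < F_area p < 1.
Proof.
  intros hp. unfold F_area. split; [apply Rdiv_lt_0_compat; lra|].
  apply Rmult_lt_reg_r with (4 * p + 2); [lra|]. field_simplify; lra.
Qed.

Lemma xstar_F_area p : 0 < p -> xstar p = 1/3 + F_area p / 6.
Proof. intros. unfold xstar, F_area. field. lra. Qed.

Lemma xstar_decreasing q1 q2 : 0 < q1 -> q1 < q2 -> xstar q2 < xstar q1.
Proof.
  intros h1 h2. unfold xstar.
  enough ((5 * q2 + 4) / (12 * (2 * q2 + 1)) < (5 * q1 + 4) / (12 * (2 * q1 + 1))) by lra.
  apply Rmult_lt_reg_r with (12 * (2 * q2 + 1) * (2 * q1 + 1)); [nra|].
  field_simplify; nra.
Qed.

Lemma xstar_bounds q : 0 < q -> 3/8 < xstar q < 1/2.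
Proof.
  intros hq. rewrite xstar_F_area by exact hq. split.
  - enough (1/4 < F_area q) by lra. unfold F_area.
    apply Rmult_lt_reg_r with (4 * q + 2); [lra|].
    replace ((q + 2) / (4 * q + 2) * (4 * q + 2)) with (q + 2) by (field; lra). lra.
  - pose proof (F_area_bounds q hq). lra.
Qed.

(* Bounds the fixed-point defect from below on [1/3,1]; the 8/9 bounds
   x F(3 - 3x) for 2/3 <= x <= 8/9. *)
Definition gap_bound p := p / (p + 1) * Rmax (8/9) (1 / (p + 1)).

Lemma gap_bound_lt p : 0 < p -> gap_bound p < p * F_area p.
Proof.
  intros hp. unfold gap_bound, F_area. apply Rmax_case.
  - apply Rmult_lt_reg_r with ((p + 1) * (4 * p + 2) / p); [apply Rdiv_lt_0_compat; nra|].
    field_simplify; try lra. apply Rmult_lt_reg_r with 9; [lra|]. field_simplify; nra.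
  - apply Rmult_lt_reg_r with ((p + 1) * (p + 1) * (4 * p + 2) / p); [apply Rdiv_lt_0_compat; nra|].
    field_simplify; nra.
Qed.

Lemma in_Cn_reflect n x : in_Cn n x <-> in_Cn n (1 - x).
Proof.
  revert x. induction n as [|n IH]; intros x; simpl; [lra|].
  rewrite (IH (3 * x)), (IH (3 * x - 2)).
  replace (1 - 3 * x) with (3 * (1 - x) - 2) by ring.
  replace (1 - (3 * x - 2)) with (3 * (1 - x)) by ring. tauto.
Qed.

Lemma in_Cn_0 n : in_Cn n 0.
Proof. induction n; simpl; [lra|]. left. now rewrite Rmult_0_r. Qed.

Lemma in_Cn_1 n : in_Cn n 1.
Proof. apply in_Cn_reflect. rewrite Rminus_diag. apply in_Cn_0. Qed.

Section CantorTypeCDF.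

Variables (p : R) (F : R -> R).
Hypotheses (hp : 0 < p) (hF : is_Fp p F).

Lemma F_mono x y : 0 <= x -> x <= y -> y <= 1 -> F x <= F y.
Proof. exact (proj1 hF x y). Qed.

Lemma F_left x : 0 <= x <= 1/3 -> F x = F (3 * x) / (p + 1).
Proof.
  intros hx. rewrite <- (proj1 (proj2 hF)) by lra. f_equal. field.
Qed.

Lemma F_right x : 2/3 <= x <= 1 -> F x = 1 - p * (F (3 - 3 * x) / (p + 1)).
Proof.
  intros hx. replace x with (1 - (1 - x)) at 1 by ring.
  rewrite (proj2 (proj2 hF)) by lra. rewrite (F_left (1 - x)) by lra.
  now replace (3 * (1 - x)) with (3 - 3 * x) by ring.
Qed.

Lemma F_0 : F 0 = 0.
Proof.
  pose proof (F_left 0 ltac:(lra)) as h. rewrite Rmult_0_r in h.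
  assert (e : F 0 * p = 0).
  { replace (F 0 * p) with ((F 0 - F 0 / (p + 1)) * (p + 1)) by (field; lra).
    rewrite <- h. ring. }
  apply Rmult_integral in e as [e|e]; lra.
Qed.

Lemma F_1 : F 1 = 1.
Proof.
  pose proof (proj2 (proj2 hF) 0 ltac:(lra)) as h.
  rewrite Rminus_0_r, F_0 in h. lra.
Qed.

Lemma F_third : F (1/3) = 1 / (p + 1).
Proof. rewrite F_left by lra. replace (3 * (1/3)) with 1 by field. now rewrite F_1. Qed.

Lemma F_two_thirds : F (2/3) = 1 / (p + 1).
Proof.
  rewrite F_right by lra. replace (3 - 3 * (2/3)) with 1 by field.
  rewrite F_1. field. lra.
Qed.

Lemma F_middle x : 1/3 <= x <= 2/3 -> F x = 1 / (p + 1).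
Proof.
  intros hx. pose proof (F_mono (1/3) x ltac:(lra) ltac:(lra) ltac:(lra)) as hl.
  pose proof (F_mono x (2/3) ltac:(lra) ltac:(lra) ltac:(lra)) as hr.
  rewrite F_third in hl. rewrite F_two_thirds in hr. lra.
Qed.

Lemma F_bounds x : 0 <= x <= 1 -> 0 <= F x <= 1.
Proof.
  intros hx. pose proof (F_mono 0 x ltac:(lra) ltac:(lra) ltac:(lra)) as hl.
  pose proof (F_mono x 1 ltac:(lra) ltac:(lra) ltac:(lra)) as hr.
  rewrite F_0 in hl. rewrite F_1 in hr. lra.
Qed.

Lemma inv_succ_bounds : 0 < 1 / (p + 1) < 1 /\ 0 < p / (p + 1) < 1.
Proof.
  split; split; try (apply Rdiv_lt_0_compat; lra);
    apply Rmult_lt_reg_r with (p + 1); try lra; field_simplify; lra.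
Qed.

Lemma F_ge_pow n x : (1/3) ^ n <= x <= 1 -> (1 / (p + 1)) ^ n <= F x.
Proof.
  revert x. pose proof inv_succ_bounds as [hq _].
  induction n as [|n IH]; intros x hx; simpl in *.
  - replace x with 1 by lra. rewrite F_1. lra.
  - assert (0 < (1/3) ^ n) by (apply pow_lt; lra).
    assert (0 <= (1 / (p + 1)) ^ n <= 1) by (split; [apply pow_le | apply pow_le_one]; lra).
    destruct (Rle_dec (1/3) x).
    + pose proof (F_mono (1/3) x ltac:(lra) ltac:(lra) ltac:(lra)) as hx3.
      rewrite F_third in hx3. nra.
    + rewrite F_left by lra. specialize (IH (3 * x) ltac:(lra)).
      replace (F (3 * x) / (p + 1)) with (1 / (p + 1) * F (3 * x)) by (field; lra).
      apply Rmult_le_compat_l; lra.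
Qed.

Lemma F_pos x : 0 < x <= 1 -> 0 < F x.
Proof.
  intros hx. destruct (pow_one_third_small x ltac:(lra)) as [n hn].
  pose proof (F_ge_pow n x ltac:(lra)).
  assert (0 < (1 / (p + 1)) ^ n) by (apply pow_lt; apply inv_succ_bounds). lra.
Qed.

Lemma F_lt_1 x : 0 <= x < 1 -> F x < 1.
Proof.
  intros hx. pose proof inv_succ_bounds as [hq _]. destruct (Rle_dec x (2/3)).
  - pose proof (F_mono x (2/3) ltac:(lra) ltac:(lra) ltac:(lra)) as hx2.
    rewrite F_two_thirds in hx2. lra.
  - rewrite F_right by lra. pose proof (F_pos (3 - 3 * x) ltac:(lra)).
    assert (0 < p * (F (3 - 3 * x) / (p + 1))) by (apply Rmult_lt_0_compat; [|apply Rdiv_lt_0_compat]; lra).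
    lra.
Qed.

Definition max_weight := Rmax 1 p / (p + 1).

Lemma max_weight_bounds :
  max_weight < 1 /\ 1 / (p + 1) <= max_weight /\ p / (p + 1) <= max_weight.
Proof.
  unfold max_weight. pose proof (Rmax_l 1 p). pose proof (Rmax_r 1 p).
  repeat split; try (apply Rmult_le_compat_r; [left; apply Rinv_0_lt_compat|]; lra).
  apply Rmult_lt_reg_r with (p + 1); [lra|]. field_simplify; [|lra].
  apply Rmax_lub_lt; lra.
Qed.

(* On the outer thirds F is a copy of itself scaled by 1/(p+1) resp. p/(p+1). *)
Lemma F_increment_le n x y : 0 <= x -> x <= y -> y <= 1 -> y - x <= (1/3) ^ n ->
  F y - F x <= max_weight ^ n.
Proof.
  pose proof max_weight_bounds as [hw1 [hwl hwr]].
  pose proof inv_succ_bounds as [[hl0 _] [hr0 _]].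
  revert x y. induction n as [|n IH]; intros x y hx hxy hy hd.
  - simpl. pose proof (F_bounds x). pose proof (F_bounds y). lra.
  - simpl in hd |- *.
    assert (0 <= max_weight ^ n) by (apply pow_le; lra).
    assert (hleft : forall a b, 0 <= a -> a <= b -> b <= 1/3 -> b - a <= 1/3 * (1/3) ^ n ->
              F b - F a <= max_weight * max_weight ^ n).
    { intros a b ha hab hb hd'. rewrite (F_left a), (F_left b) by lra.
      specialize (IH (3 * a) (3 * b) ltac:(lra) ltac:(lra) ltac:(lra) ltac:(lra)).
      pose proof (F_mono (3 * a) (3 * b) ltac:(lra) ltac:(lra) ltac:(lra)).
      replace (F (3 * b) / (p + 1) - F (3 * a) / (p + 1))
        with (1 / (p + 1) * (F (3 * b) - F (3 * a))) by (field; lra).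
      apply Rle_trans with (max_weight * (F (3 * b) - F (3 * a))); nra. }
    assert (hright : forall a b, 2/3 <= a -> a <= b -> b <= 1 -> b - a <= 1/3 * (1/3) ^ n ->
              F b - F a <= max_weight * max_weight ^ n).
    { intros a b ha hab hb hd'. rewrite (F_right a), (F_right b) by lra.
      specialize (IH (3 - 3 * b) (3 - 3 * a) ltac:(lra) ltac:(lra) ltac:(lra) ltac:(lra)).
      pose proof (F_mono (3 - 3 * b) (3 - 3 * a) ltac:(lra) ltac:(lra) ltac:(lra)).
      replace (1 - p * (F (3 - 3 * b) / (p + 1)) - (1 - p * (F (3 - 3 * a) / (p + 1))))
        with (p / (p + 1) * (F (3 - 3 * a) - F (3 - 3 * b))) by (field; lra).
      apply Rle_trans with (max_weight * (F (3 - 3 * a) - F (3 - 3 * b))); nra. }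
    assert (0 <= max_weight * max_weight ^ n) by nra.
    pose proof (pow_le_one (1/3) n ltac:(lra)).
    destruct (Rle_dec y (1/3)); [apply hleft; lra|].
    destruct (Rle_dec (2/3) x); [apply hright; lra|].
    destruct (Rle_dec x (1/3)).
    + rewrite (F_middle y), <- F_third by lra. apply hleft; lra.
    + destruct (Rle_dec y (2/3)).
      * rewrite (F_middle y), (F_middle x) by lra. lra.
      * rewrite (F_middle x), <- F_two_thirds by lra. apply hright; lra.
Qed.

(* Coquelicot integrability is derived from continuity on all of R, while F is
   unconstrained outside [0,1]; hence the clamped copy. *)
Definition Fc x := F (clamp01 x).

Lemma Fc_id x : 0 <= x <= 1 -> Fc x = F x.
Proof. intros. unfold Fc. now rewrite clamp01_id. Qed.

Lemma Fc_mono x y : x <= y -> Fc x <= Fc y.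
Proof.
  intros h. unfold Fc. pose proof (clamp01_range x). pose proof (clamp01_range y).
  apply F_mono; try lra. now apply clamp01_mono.
Qed.

Lemma Fc_bounds x : 0 <= Fc x <= 1.
Proof. apply F_bounds, clamp01_range. Qed.

Lemma Fc_dist_le n x y : Rabs (y - x) <= (1/3) ^ n -> Rabs (Fc y - Fc x) <= max_weight ^ n.
Proof.
  intros hd. pose proof (clamp01_lipschitz y x) as hc. unfold Fc.
  pose proof (clamp01_range x). pose proof (clamp01_range y).
  destruct (Rle_dec (clamp01 x) (clamp01 y)).
  - pose proof (F_mono (clamp01 x) (clamp01 y) ltac:(lra) ltac:(lra) ltac:(lra)).
    rewrite Rabs_right in hc |- * by lra. apply F_increment_le; lra.
  - pose proof (F_mono (clamp01 y) (clamp01 x) ltac:(lra) ltac:(lra) ltac:(lra)).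
    rewrite Rabs_left1 in hc |- * by lra.
    enough (F (clamp01 x) - F (clamp01 y) <= max_weight ^ n) by lra.
    apply F_increment_le; lra.
Qed.

Lemma Fc_continuous x : continuity_pt Fc x.
Proof.
  unfold continuity_pt, continue_in, limit1_in, limit_in. simpl. unfold R_dist.
  intros eps heps. pose proof max_weight_bounds as [hw [hwl _]].
  pose proof inv_succ_bounds as [[hl _] _].
  destruct (pow_lt_1_zero max_weight ltac:(rewrite Rabs_right; lra) eps heps) as [n hn].
  specialize (hn n (le_n _)). rewrite Rabs_right in hn by (apply Rle_ge, pow_le; lra).
  exists ((1/3) ^ n). split; [apply pow_lt; lra|].
  intros y [_ hy]. pose proof (Fc_dist_le n x y ltac:(lra)). lra.
Qed.

Lemma ex_RInt_Fc a b : ex_RInt Fc a b.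
Proof.
  apply (@ex_RInt_continuous R_CompleteNormedModule). intros z _.
  apply continuity_pt_filterlim, Fc_continuous.
Qed.

Lemma RInt_Fc_left a b : 0 <= a -> a <= b -> b <= 1/3 ->
  RInt Fc a b = RInt Fc (3 * a) (3 * b) / (3 * (p + 1)) :> R.
Proof.
  intros ha hab hb.
  rewrite (RInt_ext_R Fc (fun u => / (3 * (p + 1)) * (3 * Fc (3 * u + 0)))).
  2:{ intros x hx. rewrite Rmin_left, Rmax_right in hx by lra.
      rewrite Rplus_0_r, !Fc_id by lra. rewrite (F_left x) by lra. field. lra. }
  rewrite RInt_scal_R, RInt_comp_lin_R.
  - rewrite !Rplus_0_r. field. lra.
  - apply ex_RInt_Fc.
  - apply ex_RInt_comp_lin_R, ex_RInt_Fc.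
Qed.

Lemma RInt_Fc_right a b : 2/3 <= a -> a <= b -> b <= 1 ->
  RInt Fc a b = (b - a) - p / (3 * (p + 1)) * RInt Fc (3 - 3 * b) (3 - 3 * a) :> R.
Proof.
  intros ha hab hb.
  rewrite (RInt_ext_R Fc (fun u => 1 + p / (3 * (p + 1)) * (-3 * Fc (-3 * u + 3)))).
  2:{ intros x hx. rewrite Rmin_left, Rmax_right in hx by lra.
      replace (-3 * x + 3) with (3 - 3 * x) by ring.
      rewrite !Fc_id by lra. rewrite (F_right x) by lra. field. lra. }
  rewrite RInt_plus_R, RInt_const_R, RInt_scal_R, RInt_comp_lin_R, RInt_swap_R.
  - replace (-3 * a + 3) with (3 - 3 * a) by ring.
    replace (-3 * b + 3) with (3 - 3 * b) by ring. field. lra.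
  - apply ex_RInt_Fc.
  - apply ex_RInt_Fc.
  - apply ex_RInt_comp_lin_R, ex_RInt_Fc.
  - apply ex_RInt_const.
  - apply ex_RInt_scal_R, ex_RInt_comp_lin_R, ex_RInt_Fc.
Qed.

Lemma RInt_Fc_middle a b : 1/3 <= a -> a <= b -> b <= 2/3 ->
  RInt Fc a b = (b - a) / (p + 1) :> R.
Proof.
  intros ha hab hb. rewrite (RInt_ext_R Fc (fun _ => 1 / (p + 1))).
  - rewrite RInt_const_R. field. lra.
  - intros x hx. rewrite Rmin_left, Rmax_right in hx by lra.
    rewrite Fc_id by lra. apply F_middle. lra.
Qed.

Lemma RInt_Fc_Chasles a b c : RInt Fc a b + RInt Fc b c = RInt Fc a c :> R.
Proof. apply RInt_Chasles_R; apply ex_RInt_Fc. Qed.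

(* Splitting [0,1] into thirds expresses the integral through itself twice. *)
Lemma RInt_Fc_01 : RInt Fc 0 1 = F_area p :> R.
Proof.
  pose proof (RInt_Fc_Chasles 0 (1/3) 1) as h1.
  pose proof (RInt_Fc_Chasles (1/3) (2/3) 1) as h2.
  rewrite RInt_Fc_left in h1 by lra.
  rewrite RInt_Fc_middle, RInt_Fc_right in h2 by lra.
  replace (3 * 0) with 0 in h1 by ring. replace (3 * (1/3)) with 1 in h1 by field.
  replace (3 - 3 * 1) with 0 in h2 by ring. replace (3 - 3 * (2/3)) with 1 in h2 by field.
  rewrite <- h2 in h1. set (S := RInt Fc 0 1 : R) in *. unfold F_area.
  assert (e : p + 2 - S * (4 * p + 2) =
          3 * (p + 1) * (S / (3 * (p + 1)) + ((2/3 - 1/3) / (p + 1)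
                         + ((1 - 2/3) - p / (3 * (p + 1)) * S)) - S)) by (field; lra).
  rewrite h1, Rminus_diag, Rmult_0_r in e.
  apply Rmult_eq_reg_r with (4 * p + 2); [|lra]. field_simplify; lra.
Qed.

Lemma Defs_RInt_surv a b : 0 <= a <= b -> b <= 1 ->
  Defs.RInt (fun u => 1 - F u) a b = (b - a) - RInt Fc a b.
Proof.
  intros hab hb.
  assert (ext : forall x, Rmin a b < x < Rmax a b -> 1 - F x = 1 + -1 * Fc x).
  { intros x hx. rewrite Rmin_left, Rmax_right in hx by lra. rewrite Fc_id by lra. ring. }
  assert (hex : ex_RInt (fun u => 1 - F u) a b).
  { apply (ex_RInt_ext (fun u => 1 + -1 * Fc u)); [intros; symmetry; auto|].
    apply (ex_RInt_plus (V := R_NormedModule));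
      [apply ex_RInt_const | apply ex_RInt_scal_R, ex_RInt_Fc]. }
  rewrite Defs_RInt_eq, (RInt_ext_R _ _ _ _ ext) by exact hex.
  rewrite RInt_plus_R, RInt_const_R, RInt_scal_R.
  - ring.
  - apply ex_RInt_Fc.
  - apply ex_RInt_const.
  - apply ex_RInt_scal_R, ex_RInt_Fc.
Qed.

Lemma Fp_mean : mean F = 3 / 2 * (p / (2 * p + 1)).
Proof.
  unfold mean. rewrite Defs_RInt_surv, RInt_Fc_01 by lra.
  unfold F_area. field. lra.
Qed.

Definition int_surv x := (1 - x) - RInt Fc x 1.
Definition surv x := 1 - Fc x.
Definition mrl_c x := int_surv x / surv x.

Lemma int_surv_1 : int_surv 1 = 0.
Proof. unfold int_surv. rewrite RInt_point. change (zero : R) with 0. ring. Qed.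

Lemma int_surv_split a b : int_surv a = (b - a) - RInt Fc a b + int_surv b.
Proof. unfold int_surv. rewrite <- (RInt_Fc_Chasles a b 1). ring. Qed.

Lemma RInt_Fc_bounds a b : a <= b -> (b - a) * Fc a <= RInt Fc a b <= (b - a) * Fc b.
Proof. intros hab. apply RInt_le_const_bounds; auto using ex_RInt_Fc, Fc_mono. Qed.

Lemma int_surv_bounds x : x <= 1 -> 0 <= int_surv x <= (1 - x) * surv x.
Proof.
  intros hx. pose proof (int_surv_split x 1) as h. rewrite int_surv_1 in h.
  pose proof (RInt_Fc_bounds x 1 hx) as hb.
  rewrite (Fc_id 1), F_1 in hb by lra. unfold surv. nra.
Qed.

Lemma int_surv_decr_lipschitz x y : x <= y -> 0 <= int_surv x - int_surv y <= y - x.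
Proof.
  intros hxy. pose proof (int_surv_split x y). pose proof (RInt_Fc_bounds x y hxy).
  pose proof (Fc_bounds x). pose proof (Fc_bounds y). nra.
Qed.

Lemma int_surv_le_step a b : a <= b -> int_surv a <= (b - a) * surv a + int_surv b.
Proof.
  intros hab. pose proof (int_surv_split a b). pose proof (RInt_Fc_bounds a b hab).
  unfold surv. nra.
Qed.

Lemma surv_pos x : 0 <= x < 1 -> 0 < surv x.
Proof. intros hx. unfold surv. rewrite Fc_id by lra. pose proof (F_lt_1 x hx). lra. Qed.

Lemma int_surv_pos x : 0 <= x < 1 -> 0 < int_surv x.
Proof.
  intros hx. set (y := (1 + x) / 2).
  pose proof (int_surv_split x y). pose proof (RInt_Fc_bounds x y ltac:(unfold y; lra)).
  pose proof (int_surv_bounds y ltac:(unfold y; lra)).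
  pose proof (surv_pos y ltac:(unfold y; lra)). unfold surv, y in *. nra.
Qed.

Lemma mrl_eq_mrl_c x : 0 <= x <= 1 -> mrl F x = mrl_c x.
Proof.
  intros hx. unfold mrl, mrl_c. destruct (Rlt_dec x 1).
  - rewrite Defs_RInt_surv by lra. unfold int_surv, surv. now rewrite Fc_id by lra.
  - replace x with 1 by lra. rewrite int_surv_1. unfold Rdiv. ring.
Qed.

Lemma mrl_c_bounds x : 0 <= x <= 1 -> 0 <= mrl_c x <= 1 - x.
Proof.
  intros hx. unfold mrl_c. destruct (Rlt_dec x 1).
  - pose proof (surv_pos x ltac:(lra)). pose proof (int_surv_bounds x ltac:(lra)).
    split; [apply Rdiv_le_0_compat; lra|].
    apply Rmult_le_reg_r with (surv x); [lra|]. field_simplify; lra.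
  - replace x with 1 by lra. rewrite int_surv_1. unfold Rdiv. lra.
Qed.

Lemma int_surv_continuous x : continuity_pt int_surv x.
Proof.
  unfold continuity_pt, continue_in, limit1_in, limit_in. simpl. unfold R_dist.
  intros eps heps. exists eps. split; auto. intros y [_ hy].
  destruct (Rle_dec x y).
  - pose proof (int_surv_decr_lipschitz x y r).
    rewrite Rabs_right in hy by lra. rewrite Rabs_left1 by lra. lra.
  - pose proof (int_surv_decr_lipschitz y x ltac:(lra)).
    rewrite Rabs_left1 in hy by lra. rewrite Rabs_right by lra. lra.
Qed.

Lemma mrl_c_continuous x : 0 <= x < 1 -> continuity_pt mrl_c x.
Proof.
  intros hx. apply continuity_pt_div; [apply int_surv_continuous | | now apply Rgt_not_eq, surv_pos].
  apply continuity_pt_minus; [apply continuity_pt_const; now intros | apply Fc_continuous].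
Qed.

Lemma mrl_continuous_within x : 0 <= x <= 1 ->
  limit1_in (mrl F) (fun y => 0 <= y <= 1) (mrl F x) x.
Proof.
  intros hx. unfold limit1_in, limit_in. simpl. unfold R_dist. intros eps heps.
  destruct (Rlt_dec x 1).
  - destruct (mrl_c_continuous x ltac:(lra) eps heps) as [d [hd hcont]]. exists d. split; auto.
    intros y [hy hyx]. rewrite !mrl_eq_mrl_c by lra.
    destruct (Req_dec x y) as [<-|hne]; [rewrite Rminus_diag, Rabs_R0; lra|].
    apply hcont. repeat split; auto.
  - replace x with 1 by lra. exists eps. split; auto. intros y [hy hyx].
    rewrite !mrl_eq_mrl_c by lra.
    pose proof (mrl_c_bounds y hy). pose proof (mrl_c_bounds 1 ltac:(lra)).
    replace (mrl_c 1) with 0 by lra. rewrite Rminus_0_r, Rabs_right by lra.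
    rewrite Rabs_left1 in hyx by lra. lra.
Qed.

Lemma gmrl_continuous x : 0 < x < 1 -> continuity_pt (gmrl F) x.
Proof.
  intros hx. apply (continuity_pt_locally_ext (fun y => mrl_c y / y) _ (Rmin x (1 - x))).
  - apply Rmin_pos; lra.
  - intros y hy. unfold Rdist in hy. pose proof (Rmin_l x (1 - x)). pose proof (Rmin_r x (1 - x)).
    unfold gmrl. rewrite mrl_eq_mrl_c; [reflexivity|].
    unfold Rabs in hy. destruct Rcase_abs in hy; lra.
  - apply continuity_pt_div; [apply mrl_c_continuous; lra | apply continuity_pt_id | unfold id; lra].
Qed.

Definition fix_gap x := int_surv x - x * surv x.

Lemma mrl_c_fixed_iff x : 0 <= x < 1 -> mrl_c x = x <-> fix_gap x = 0.
Proof.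
  intros hx. pose proof (surv_pos x hx). unfold mrl_c, fix_gap. split; intros h.
  - assert (e : int_surv x = int_surv x / surv x * surv x) by (field; lra).
    rewrite h in e. lra.
  - replace (int_surv x) with (x * surv x) by lra. field. lra.
Qed.

Lemma RInt_Fc_two_thirds_1 : RInt Fc (2/3) 1 = 1/3 - p / (3 * (p + 1)) * F_area p :> R.
Proof.
  rewrite RInt_Fc_right by lra.
  replace (3 - 3 * 1) with 0 by ring. replace (3 - 3 * (2/3)) with 1 by field.
  rewrite RInt_Fc_01. field. lra.
Qed.

Lemma fix_gap_middle x : 1/3 <= x <= 2/3 -> fix_gap x = p / (p + 1) * (2/3 - 2 * x + F_area p / 3).
Proof.
  intros hx. unfold fix_gap, int_surv, surv.
  rewrite <- (RInt_Fc_Chasles x (2/3) 1), (RInt_Fc_middle x), RInt_Fc_two_thirds_1 by lra.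
  rewrite Fc_id, F_middle by lra. field. lra.
Qed.

Lemma fix_gap_left x : 0 <= x <= 1/3 ->
  (p + 1) * fix_gap x = fix_gap (3 * x) / 3 + p * (2/3 + F_area p / 3) - 2 * p * x.
Proof.
  intros hx. unfold fix_gap, int_surv, surv.
  rewrite <- (RInt_Fc_Chasles x (1/3) 1), <- (RInt_Fc_Chasles (1/3) (2/3) 1).
  rewrite (RInt_Fc_left x (1/3)), (RInt_Fc_middle (1/3) (2/3)), RInt_Fc_two_thirds_1 by lra.
  replace (3 * (1/3)) with 1 by field.
  rewrite (Fc_id x), (Fc_id (3 * x)), (F_left x) by lra. field. lra.
Qed.

Lemma fix_gap_neg x : 1/2 < x < 1 -> fix_gap x < 0.
Proof.
  intros hx. unfold fix_gap. pose proof (int_surv_bounds x ltac:(lra)).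
  pose proof (surv_pos x ltac:(lra)). nra.
Qed.

Lemma fix_gap_ge_outer x : 1/3 <= x <= 1 -> - gap_bound p <= fix_gap x.
Proof.
  intros hx. pose proof inv_succ_bounds as [_ [hw _]].
  pose proof (Rmax_l (8/9) (1 / (p + 1))). unfold gap_bound.
  destruct (Rle_dec x (2/3)).
  - rewrite fix_gap_middle by lra. pose proof (F_area_bounds p hp). nra.
  - unfold fix_gap. pose proof (int_surv_bounds x ltac:(lra)).
    unfold surv. rewrite Fc_id, F_right by lra.
    pose proof (F_bounds (3 - 3 * x) ltac:(lra)).
    replace (x * (1 - (1 - p * (F (3 - 3 * x) / (p + 1)))))
      with (p / (p + 1) * (x * F (3 - 3 * x))) by (field; lra).
    enough (x * F (3 - 3 * x) <= Rmax (8/9) (1 / (p + 1))) by nra.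
    destruct (Rle_dec x (8/9)); [nra|].
    pose proof (F_mono (3 - 3 * x) (1/3) ltac:(lra) ltac:(lra) ltac:(lra)) as hF3.
    rewrite F_third in hF3. pose proof (Rmax_r (8/9) (1 / (p + 1))). nra.
Qed.

Lemma fix_gap_left_pos x : 0 <= x <= 1/3 -> - gap_bound p <= fix_gap (3 * x) -> 0 < fix_gap x.
Proof.
  intros hx h3x. pose proof (fix_gap_left x hx). pose proof (gap_bound_lt p hp).
  assert (0 < (p + 1) * fix_gap x) by nra.
  destruct (Rle_dec (fix_gap x) 0); nra.
Qed.

Lemma fix_gap_ge n x : (1/3) ^ n <= x <= 1 -> - gap_bound p <= fix_gap x.
Proof.
  revert x. assert (0 <= gap_bound p).
  { unfold gap_bound. pose proof inv_succ_bounds as [_ [hw _]].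
    pose proof (Rmax_l (8/9) (1 / (p + 1))). nra. }
  induction n as [|n IH]; intros x hx; simpl in hx.
  - apply fix_gap_ge_outer. lra.
  - destruct (Rle_dec (1/3) x); [apply fix_gap_ge_outer; lra|].
    assert (0 < fix_gap x); [|lra].
    assert (0 < (1/3) ^ n) by (apply pow_lt; lra).
    apply fix_gap_left_pos; [lra|]. apply IH. lra.
Qed.

Lemma fix_gap_pos x : 0 <= x <= 1/3 -> 0 < fix_gap x.
Proof.
  intros hx. destruct (Req_dec x 0) as [->|hx0].
  - pose proof (fix_gap_left 0 ltac:(lra)) as h. rewrite Rmult_0_r in h.
    pose proof (F_area_bounds p hp). nra.
  - apply fix_gap_left_pos; [lra|].
    destruct (pow_one_third_small (3 * x) ltac:(lra)) as [n hn].
    apply (fix_gap_ge n). lra.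
Qed.

Lemma mrl_fixed_unique x : 0 <= x <= 1 -> mrl F x = x -> x = xstar p.
Proof.
  intros hx h. rewrite mrl_eq_mrl_c in h by lra.
  destruct (Req_dec x 1) as [->|hx1].
  { pose proof (mrl_c_bounds 1 ltac:(lra)). lra. }
  apply mrl_c_fixed_iff in h; [|lra].
  destruct (Rle_dec x (1/3)); [pose proof (fix_gap_pos x ltac:(lra)); lra|].
  destruct (Rle_dec x (2/3)); [|pose proof (fix_gap_neg x ltac:(lra)); lra].
  rewrite fix_gap_middle in h by lra. rewrite xstar_F_area by exact hp.
  pose proof (proj2 inv_succ_bounds). apply Rmult_integral in h as [h|h]; lra.
Qed.

Lemma mrl_fixed_xstar : mrl F (xstar p) = xstar p.
Proof.
  pose proof (xstar_bounds p hp). rewrite mrl_eq_mrl_c by lra.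
  apply mrl_c_fixed_iff; [lra|]. rewrite xstar_F_area in * by exact hp.
  pose proof (F_area_bounds p hp). rewrite fix_gap_middle by lra. field. lra.
Qed.

Lemma F_locally_constant_off_Cn n x : 0 <= x <= 1 -> ~ in_Cn n x ->
  exists a b, a < x < b /\ forall u, a < u < b -> 0 <= u <= 1 -> F u = F x.
Proof.
  revert x. induction n as [|n IH]; intros x hx hn; simpl in hn; [tauto|].
  apply not_or_and in hn as [hl hr].
  destruct (Rle_dec x (1/3)).
  - assert (x <> 1/3) by (intros ->; apply hl; replace (3 * (1/3)) with 1 by field; apply in_Cn_1).
    destruct (IH (3 * x) ltac:(lra) hl) as [a [b [hab hu]]].
    exists (a / 3), (Rmin (b / 3) (1/3)). split.
    + split; [lra|]. apply Rmin_glb_lt; lra.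
    + intros u hu1 hu2. pose proof (Rmin_l (b / 3) (1/3)). pose proof (Rmin_r (b / 3) (1/3)).
      rewrite (F_left u), (F_left x), (hu (3 * u)) by lra. reflexivity.
  - destruct (Rle_dec (2/3) x).
    + assert (x <> 2/3) by (intros ->; apply hr; replace (3 * (2/3) - 2) with 0 by field; apply in_Cn_0).
      rewrite in_Cn_reflect in hr. replace (1 - (3 * x - 2)) with (3 - 3 * x) in hr by ring.
      destruct (IH (3 - 3 * x) ltac:(lra) hr) as [a [b [hab hu]]].
      exists (Rmax (2/3) ((3 - b) / 3)), ((3 - a) / 3). split.
      * split; [apply Rmax_lub_lt|]; lra.
      * intros u hu1 hu2. pose proof (Rmax_l (2/3) ((3 - b) / 3)). pose proof (Rmax_r (2/3) ((3 - b) / 3)).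
        rewrite (F_right u), (F_right x), (hu (3 - 3 * u)) by lra. reflexivity.
    + exists (1/3), (2/3). split; [lra|]. intros u hu1 hu2.
      rewrite (F_middle u), (F_middle x) by lra. reflexivity.
Qed.

(* Zooming into the third of larger weight multiplies difference quotients by
   3 max(1,p)/(p+1) >= 3/2. *)
Lemma F_steep_somewhere j : exists a b, 0 <= a < b /\ b <= 1 /\
  (1 + INR j / 2) * (b - a) <= F b - F a.
Proof.
  induction j as [|j [a [b [hab [hb hslope]]]]].
  - exists 0, 1. rewrite F_0, F_1. simpl. lra.
  - rewrite S_INR. assert (0 <= INR j) by apply pos_INR.
    assert (0 <= (1 + INR j / 2) * (b - a)) by nra.
    destruct (Rle_dec 1 p).
    + exists (1 - b / 3), (1 - a / 3). do 2 (split; [lra|]).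
      rewrite (F_right (1 - b / 3)), (F_right (1 - a / 3)) by lra.
      replace (3 - 3 * (1 - a / 3)) with a by field. replace (3 - 3 * (1 - b / 3)) with b by field.
      assert (1/2 <= p / (p + 1)) by (apply Rmult_le_reg_r with (2 * (p + 1)); [lra|]; field_simplify; lra).
      replace (1 - p * (F a / (p + 1)) - (1 - p * (F b / (p + 1)))) with (p / (p + 1) * (F b - F a))
        by (field; lra).
      nra.
    + exists (a / 3), (b / 3). do 2 (split; [lra|]).
      rewrite (F_left (a / 3)), (F_left (b / 3)) by lra.
      replace (3 * (a / 3)) with a by field. replace (3 * (b / 3)) with b by field.
      assert (1/2 <= 1 / (p + 1)) by (apply Rmult_le_reg_r with (2 * (p + 1)); [lra|]; field_simplify; lra).
      replace (F b / (p + 1) - F a / (p + 1)) with (1 / (p + 1) * (F b - F a)) by (field; lra).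
      nra.
Qed.

Lemma F_steep_near_Cn n x K : in_Cn n x -> exists a b,
  x - (1/3) ^ n <= a /\ a < b /\ b <= x + (1/3) ^ n /\ 0 <= a /\ b <= 1 /\ K * (b - a) < F b - F a.
Proof.
  revert x K. induction n as [|n IH]; intros x K hx; simpl in hx |- *.
  - destruct (INR_unbounded (2 * K)) as [j hj].
    destruct (F_steep_somewhere j) as [a [b [hab [hb hslope]]]].
    exists a, b. repeat split; try lra. nra.
  - assert (0 < (1/3) ^ n) by (apply pow_lt; lra).
    destruct hx as [hx|hx].
    + destruct (IH (3 * x) (K * (p + 1) / 3) hx) as [a [b [h1 [h2 [h3 [h4 [h5 h6]]]]]]].
      exists (a / 3), (b / 3). repeat split; try lra.
      rewrite (F_left (a / 3)), (F_left (b / 3)) by lra.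
      replace (3 * (a / 3)) with a by field. replace (3 * (b / 3)) with b by field.
      apply Rmult_lt_reg_r with (p + 1); [lra|].
      replace ((F b / (p + 1) - F a / (p + 1)) * (p + 1)) with (F b - F a) by (field; lra).
      replace (K * (b / 3 - a / 3) * (p + 1)) with (K * (p + 1) / 3 * (b - a)) by field. exact h6.
    + rewrite in_Cn_reflect in hx. replace (1 - (3 * x - 2)) with (3 - 3 * x) in hx by ring.
      destruct (IH (3 - 3 * x) (K * (p + 1) / (3 * p)) hx) as [a [b [h1 [h2 [h3 [h4 [h5 h6]]]]]]].
      exists (1 - b / 3), (1 - a / 3). repeat split; try lra.
      rewrite (F_right (1 - b / 3)), (F_right (1 - a / 3)) by lra.
      replace (3 - 3 * (1 - a / 3)) with a by field. replace (3 - 3 * (1 - b / 3)) with b by field.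
      replace (1 - p * (F a / (p + 1)) - (1 - p * (F b / (p + 1)))) with (p / (p + 1) * (F b - F a))
        by (field; lra).
      replace (K * (1 - a / 3 - (1 - b / 3))) with (p / (p + 1) * (K * (p + 1) / (3 * p) * (b - a)))
        by (field; lra).
      apply Rmult_lt_compat_l; [apply inv_succ_bounds | exact h6].
Qed.

Lemma F_steep_near_cantor x d K : cantor x -> 0 < d -> exists a b,
  x - d < a /\ a < b /\ b < x + d /\ 0 <= a /\ b <= 1 /\ K * (b - a) < F b - F a.
Proof.
  intros hx hd. destruct (pow_one_third_small d hd) as [n hn].
  destruct (F_steep_near_Cn n x K (hx n)) as [a [b [h1 [h2 [h3 [h4 [h5 h6]]]]]]].
  exists a, b. repeat split; lra.
Qed.

Lemma mrl_c_increment_ge a b : 0 < a -> a < b -> b < 1 ->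
  int_surv b * (F b - F a) - (b - a) <= mrl_c b - mrl_c a.
Proof.
  intros ha hab hb. unfold mrl_c.
  pose proof (surv_pos a ltac:(lra)). pose proof (surv_pos b ltac:(lra)).
  pose proof (Fc_mono a b ltac:(lra)). pose proof (Fc_bounds a).
  pose proof (int_surv_bounds b ltac:(lra)). pose proof (int_surv_le_step a b ltac:(lra)).
  assert (int_surv a / surv a <= (b - a) + int_surv b / surv a).
  { apply Rmult_le_reg_r with (surv a); [lra|].
    replace (((b - a) + int_surv b / surv a) * surv a) with ((b - a) * surv a + int_surv b)
      by (field; lra).
    replace (int_surv a / surv a * surv a) with (int_surv a) by (field; lra). lra. }
  pose proof (div_sub_div_ge_mul (int_surv b) (surv a) (surv b) ltac:(lra) ltac:(lra)).
  unfold surv in *. rewrite !Fc_id in * by lra. lra.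
Qed.

(* The slope of int_surv is at most 1, so a steep increment of F beats it. *)
Lemma mrl_c_steep_near_cantor x d L : 0 < x < 1 -> cantor x -> 0 < d -> exists a b,
  x - d < a /\ a < b /\ b < x + d /\ 0 < a /\ b < 1 /\ L * (b - a) < mrl_c b - mrl_c a.
Proof.
  intros hx hc hd.
  set (d0 := Rmin d (Rmin x ((1 - x) / 2))).
  assert (0 < d0 /\ d0 <= d /\ d0 <= x /\ d0 <= (1 - x) / 2) as [hd0 [hd0d [hd0x hd01]]].
  { unfold d0. pose proof (Rmin_l d (Rmin x ((1 - x) / 2))).
    pose proof (Rmin_r d (Rmin x ((1 - x) / 2))).
    pose proof (Rmin_l x ((1 - x) / 2)). pose proof (Rmin_r x ((1 - x) / 2)).
    repeat split; try lra. repeat apply Rmin_pos; lra. }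
  pose proof (int_surv_pos (x + d0) ltac:(lra)) as hc0.
  destruct (F_steep_near_cantor x d0 ((L + 1) / int_surv (x + d0)) hc hd0)
    as [a [b [h1 [h2 [h3 [h4 [h5 hsteep]]]]]]].
  exists a, b. do 5 (split; [lra|]).
  pose proof (mrl_c_increment_ge a b ltac:(lra) h2 ltac:(lra)).
  pose proof (int_surv_decr_lipschitz b (x + d0) ltac:(lra)).
  pose proof (F_mono a b ltac:(lra) ltac:(lra) ltac:(lra)).
  assert ((L + 1) * (b - a) < int_surv (x + d0) * (F b - F a)).
  { replace ((L + 1) * (b - a)) with (int_surv (x + d0) * ((L + 1) / int_surv (x + d0) * (b - a)))
      by (field; lra).
    apply Rmult_lt_compat_l; lra. }
  nra.
Qed.

Lemma loc_decr_mrl_iff x : 0 < x < 1 -> loc_decr (mrl F) x <-> ~ cantor x.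
Proof.
  intros hx. split.
  - intros [d [hd hdecr]] hc.
    destruct (mrl_c_steep_near_cantor x d 0 hx hc hd) as [a [b [h1 [h2 [h3 [h4 [h5 hsteep]]]]]]].
    specialize (hdecr a b h1 ltac:(lra) h3 h4 h5).
    rewrite !mrl_eq_mrl_c in hdecr by lra. lra.
  - intros hnc. apply not_all_ex_not in hnc as [n hn].
    destruct (F_locally_constant_off_Cn n x ltac:(lra) hn) as [a [b [hab hconst]]].
    exists (Rmin (x - a) (b - x)). split; [apply Rmin_pos; lra|].
    intros y z h1 h2 h3 h4 h5.
    pose proof (Rmin_l (x - a) (b - x)). pose proof (Rmin_r (x - a) (b - x)).
    assert (surv y = 1 - F x /\ surv z = 1 - F x) as [ey ez].
    { unfold surv. rewrite (Fc_id y), (Fc_id z), (hconst y), (hconst z) by lra. split; reflexivity. }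
    pose proof (surv_pos z ltac:(lra)).
    pose proof (int_surv_decr_lipschitz y z h2).
    rewrite !mrl_eq_mrl_c by lra. unfold mrl_c. rewrite ey, ez in *.
    apply Rmult_le_compat_r; [left; apply Rinv_0_lt_compat|]; lra.
Qed.

Lemma loc_decr_gmrl_iff x : 0 < x < 1 -> loc_decr (gmrl F) x <-> ~ cantor x.
Proof.
  intros hx. split.
  - intros [d [hd hdecr]] hc.
    destruct (mrl_c_steep_near_cantor x (Rmin d (x / 2)) (2 / x) hx hc
                ltac:(apply Rmin_pos; lra)) as [a [b [h1 [h2 [h3 [h4 [h5 hsteep]]]]]]].
    pose proof (Rmin_l d (x / 2)). pose proof (Rmin_r d (x / 2)).
    specialize (hdecr a b ltac:(lra) ltac:(lra) ltac:(lra) h4 h5).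
    unfold gmrl in hdecr. rewrite !mrl_eq_mrl_c in hdecr by lra.
    pose proof (mrl_c_bounds a ltac:(lra)).
    (* m(b)/b - m(a)/a >= (b - a)/b * (2/x - 1/a) > 0 because a > x/2. *)
    assert (2 / x * a > 1) by (apply Rmult_lt_reg_r with x; [lra|]; field_simplify; lra).
    assert (a * mrl_c b <= b * mrl_c a).
    { apply Rmult_le_reg_r with (/ (a * b)); [apply Rinv_0_lt_compat; nra|].
      replace (a * mrl_c b * / (a * b)) with (mrl_c b / b) by (field; lra).
      replace (b * mrl_c a * / (a * b)) with (mrl_c a / a) by (field; lra). exact hdecr. }
    nra.
  - intros hnc. apply (loc_decr_mrl_iff x hx) in hnc as [d [hd hdecr]].
    exists d. split; [exact hd|]. intros y z h1 h2 h3 h4 h5.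
    specialize (hdecr y z h1 h2 h3 h4 h5). unfold gmrl.
    rewrite !mrl_eq_mrl_c in * by lra. pose proof (mrl_c_bounds z ltac:(lra)).
    apply Rle_trans with (mrl_c y / z).
    + apply Rmult_le_compat_r; [left; apply Rinv_0_lt_compat; lra | exact hdecr].
    + apply Rmult_le_compat_l; [lra | apply Rinv_le_contravar; lra].
Qed.

End CantorTypeCDF.

Theorem theorem2 (p : R) (F : R -> R) (hp : 0 < p) (hF : is_Fp p F) :
  (* (i) *)
  mean F = 3 / 2 * (p / (2 * p + 1)) /\
  (* (ii) *)
  ((forall x, 0 <= x <= 1 -> limit1_in (mrl F) (fun y => 0 <= y <= 1) (mrl F x) x) /\
   (forall x, 0 < x < 1 -> continuity_pt (gmrl F) x) /\
   (forall x, 0 < x < 1 -> (loc_decr (mrl F) x <-> ~ cantor x)) /\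
   (forall x, 0 < x < 1 -> (loc_decr (gmrl F) x <-> ~ cantor x))) /\
  (* (iii) *)
  ((exists! x, 0 <= x <= 1 /\ mrl F x = x) /\
   (forall x, 0 <= x <= 1 -> mrl F x = x -> x = xstar p) /\
   (forall q1 q2, 0 < q1 -> q1 < q2 -> xstar q2 < xstar q1) /\
   (forall q, 0 < q -> 3 / 8 < xstar q < 1 / 2)).
Proof.
  split; [|split].
  - exact (Fp_mean p F hp hF).
  - split; [|split; [|split]].
    + exact (mrl_continuous_within p F hp hF).
    + exact (gmrl_continuous p F hp hF).
    + exact (loc_decr_mrl_iff p F hp hF).
    + exact (loc_decr_gmrl_iff p F hp hF).
  - split; [|split; [|split]].
    + exists (xstar p). pose proof (xstar_bounds p hp). split.
      * split; [lra | exact (mrl_fixed_xstar p F hp hF)].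
      * intros y [hy e]. symmetry. exact (mrl_fixed_unique p F hp hF y hy e).
    + exact (mrl_fixed_unique p F hp hF).
    + exact xstar_decreasing.
    + exact xstar_bounds.
Qed.
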